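(* Let $\gamma>1$ and $\alpha^2>0$ be constants and $P=\mathrm{diag}(\alpha^2,\tfrac{\gamma-1}{2},\tfrac{\gamma-1}{2},1)$. On a rectangular grid with nodes $(x_i,y_j)$, $i=1,\dots,N$, $j=1,\dots,M$, let $D_x=P_x^{-1}Q_x$ ($N\times N$) and $D_y=P_y^{-1}Q_y$ ($M\times M$) be one-dimensional summation-by-parts (SBP) operators, i.e. $P_x,P_y$ are diagonal positive definite and $Q_x+Q_x^T=B_x:=\mathrm{diag}(-1,0,\dots,0,1)$, $Q_y+Q_y^T=B_y:=\mathrm{diag}(-1,0,\dots,0,1)$. Set $\mathbf{D_x}=I_4\otimes D_x\otimes I_M$, $\mathbf{D_y}=I_4\otimes I_N\otimes D_y$, $\tilde{\mathbf P}=I_4\otimes P_x\otimes P_y$, $\mathbf P=P\otimes I_N\otimes I_M$, $\mathbf{B_x}=I_4\otimes B_x\otimes P_y$, $\mathbf{B_y}=I_4\otimes P_x\otimes B_y$. Let $\vec\Phi(t)=(\vec\Phi_1^T,\dots,\vec\Phi_4^T)^T\in\mathbb{R}^{4NM}$, where $\vec\Phi_k$ collects nodal values approximating $\phi_k$ and the entries of $\vec\Phi_1$ are nonzero. For a $4\times4$ matrix function $A$ of the nodal values of $\Phi=(\phi_1,\dots,\phi_4)$ with entries $a_{kl}$, let $\mathbf A$ denote the $4NM\times4NM$ block matrix whose $(k,l)$ block is $\mathrm{diag}\big(a_{kl}(x_1,y_1),\dots,a_{kl}(x_N,y_M)\big)$ (nodal values, in the same ordering as $\vec\Phi_k$). Apply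 this with $u=\phi_2/\phi_1$, $v=\phi_3/\phi_1$ to $$A_1=\frac12\begin{bmatrix}u&0&0&0\\0&u&0&0\\0&0&u&0\\0&2(\gamma-1)\frac{\phi_4}{\phi_1}&0&(2-\gamma)u\end{bmatrix},\quad A_2=\frac12\begin{bmatrix}u&0&0&0\\0&u&0&4\frac{\phi_4}{\phi_1}\\0&0&u&0\\0&0&0&(2-\gamma)u\end{bmatrix},$$ $$B_1=\frac12\begin{bmatrix}v&0&0&0\\0&v&0&0\\0&0&v&0\\0&0&2(\gamma-1)\frac{\phi_4}{\phi_1}&(2-\gamma)v\end{bmatrix},\quad B_2=\frac12\begin{bmatrix}v&0&0&0\\0&v&0&0\\0&0&v&4\frac{\phi_4}{\phi_1}\\0&0&0&(2-\gamma)v\end{bmatrix},$$ obtaining $\mathbf{A_1},\mathbf{A_2},\mathbf{B_1},\mathbf{B_2}$. If $\vec\Phi$ is a differentiable solution of the semi-discrete scheme $$\vec\Phi_t+\mathbf{D_x}(\mathbf{A_1}\vec\Phi)+\mathbf{A_2}\mathbf{D_x}\vec\Phi+\mathbf{D_y}(\mathbf{B_1}\vec\Phi)+\mathbf{B_2}\mathbf{D_y}\vec\Phi=0,$$ then, with $\tilde{\mathbf A}=2\mathbf P\mathbf{A_1}$ and $\tilde{\mathbf B}=2\mathbf P\mathbf{B_1}$, $$\frac{d}{dt}\,\vec\Phi^T(\mathbf P\tilde{\mathbf P})\vec\Phi+\vec\Phi^T\big(\mathbf{B_x}\tilde{\mathbf A}+\mathbf{B_y}\tilde{\mathbf B}\big)\vec\Phi=0,$$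 i.e. the discrete energy $\vec\Phi^T(\mathbf P\tilde{\mathbf P})\vec\Phi$ changes only through boundary terms.
   Context: The variables $\phi_1,\phi_2,\phi_3,\phi_4$ correspond to $\sqrt{\rho},\sqrt{\rho}u,\sqrt{\rho}v,\sqrt{p}$ for the compressible Euler equations with density $\rho$, velocities $u,v$, pressure $p$, and ratio of specific heats $\gamma$. $\otimes$ denotes the Kronecker product and $I_k$ the $k\times k$ identity. *)

From HB Require Import structures.
From mathcomp Require Import all_boot all_order all_algebra.
From mathcomp Require Import all_classical all_reals all_analysis.
From mathcomp Require Import mxtens.
Set Implicit Arguments. Unset Strict Implicit. Unset Printing Implicit Defensive.
Import Order.TTheory GRing.Theory Num.Theory.
Local Open Scope ring_scope.

Section Defs.
Variable R : realType.

Definition sbpB (n : nat) : 'M[R]_n :=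
  \matrix_(i, j) if i == j then
                   (if (i : nat) == 0%N then -1
                    else if (i : nat) == n.-1 then 1 else 0)
                 else 0.

Definition is_SBP (n : nat) (P Q : 'M[R]_n) : Prop :=
  is_diag_mx P /\ (forall i, 0 < P i i) /\ Q + Q^T = sbpB n.

(* index of the nodal value (k, i, j) in a vector of R^{4 N M},
   consistent with the Kronecker ordering I_4 (x) I_N (x) I_M *)
Definition idx (N M : nat) (k : 'I_4) (i : 'I_N) (j : 'I_M) : 'I_(4 * N * M) :=
  mxtens_index (mxtens_index (k, i), j).

Definition nodal (N M : nat) (Phi : 'cV[R]_(4 * N * M)) (i : 'I_N) (j : 'I_M)
  : 'I_4 -> R := fun k => Phi (idx k i j) 0.

Definition boldmx (N M : nat) (F : ('I_4 -> R) -> 'M[R]_4)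
    (Phi : 'cV[R]_(4 * N * M)) : 'M[R]_(4 * N * M) :=
  \sum_(k < 4) \sum_(l < 4) \sum_(i < N) \sum_(j < M)
     F (nodal Phi i j) k l *: ((delta_mx k l *t delta_mx i i) *t delta_mx j j).

Definition mx4 (f : nat -> nat -> R) : 'M[R]_4 := \matrix_(k, l) f k l.

Definition A1 (g : R) (p : 'I_4 -> R) : 'M[R]_4 :=
  let u := p 1 / p 0 in
  (1/2) *: mx4 (fun k l => match k, l with
    | 0%N, 0%N | 1%N, 1%N | 2%N, 2%N => u
    | 3%N, 1%N => 2 * (g - 1) * (p 3 / p 0)
    | 3%N, 3%N => (2 - g) * u
    | _, _ => 0 end).

Definition A2 (g : R) (p : 'I_4 -> R) : 'M[R]_4 :=
  let u := p 1 / p 0 in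
  (1/2) *: mx4 (fun k l => match k, l with
    | 0%N, 0%N | 1%N, 1%N | 2%N, 2%N => u
    | 1%N, 3%N => 4 * (p 3 / p 0)
    | 3%N, 3%N => (2 - g) * u
    | _, _ => 0 end).

Definition B1 (g : R) (p : 'I_4 -> R) : 'M[R]_4 :=
  let v := p 2 / p 0 in
  (1/2) *: mx4 (fun k l => match k, l with
    | 0%N, 0%N | 1%N, 1%N | 2%N, 2%N => v
    | 3%N, 2%N => 2 * (g - 1) * (p 3 / p 0)
    | 3%N, 3%N => (2 - g) * v
    | _, _ => 0 end).

Definition B2 (g : R) (p : 'I_4 -> R) : 'M[R]_4 :=
  let v := p 2 / p 0 in
  (1/2) *: mx4 (fun k l => match k, l with
    | 0%N, 0%N | 1%N, 1%N | 2%N, 2%N => v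
    | 2%N, 3%N => 4 * (p 3 / p 0)
    | 3%N, 3%N => (2 - g) * v
    | _, _ => 0 end).

Definition Pmat (g alpha2 : R) : 'M[R]_4 :=
  mx4 (fun k l => match k, l with
    | 0%N, 0%N => alpha2
    | 1%N, 1%N | 2%N, 2%N => (g - 1) / 2
    | 3%N, 3%N => 1
    | _, _ => 0 end).

End Defs.

From HB Require Import structures.
From mathcomp Require Import all_boot all_order all_algebra.
From mathcomp Require Import all_classical all_reals all_analysis.
From mathcomp Require Import mxtens.
From mathcomp Require Import ring.
Set Implicit Arguments. Unset Strict Implicit. Unset Printing Implicit Defensive.
Import Order.TTheory GRing.Theory Num.Theory numFieldNormedType.Exports.
Local Open Scope classical_set_scope.
Local Open Scope ring_scope.

(* Multiply the scheme by Phi^T P P~.  Since P~ D_x = I_4 (x) Q_x (x) P_y =: Q,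
   the term D_x (A_1 Phi) contributes Phi^T Q C Phi with C = P A_1.  The matrix
   P symmetrises the splitting, P A_2 = A_1^T P, and A_2, being nodally
   diagonal, commutes with P~; hence A_2 D_x Phi contributes
   Phi^T C^T Q Phi = Phi^T Q^T C Phi.  Together this is
   Phi^T (Q + Q^T) C Phi = 1/2 Phi^T B_x A~ Phi by the SBP property, and the
   y-direction is identical.  The energy derivative being 2 Phi^T P P~ Phi_t,
   the boundary-flux identity follows. *)

Section DiagonalMatrix.
Variable R : comPzRingType.

Lemma trmx_diag n (D : 'M[R]_n) : is_diag_mx D -> D^T = D.
Proof. by case/diag_mxP => d ->; rewrite tr_diag_mx. Qed.

Lemma mul_diag_delta_mx n p (D : 'M[R]_n) (k : 'I_n) (l : 'I_p) :
  is_diag_mx D -> D *m delta_mx k l = D k k *: delta_mx k l.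
Proof.
case/diag_mxP => d ->; apply/matrixP => a b.
by rewrite mul_diag_mx !mxE eqxx mulr1n; case: eqVneq => [->|]; rewrite ?mulr0.
Qed.

Lemma mul_delta_diag_mx n p (D : 'M[R]_n) (k : 'I_p) (l : 'I_n) :
  is_diag_mx D -> delta_mx k l *m D = D l l *: delta_mx k l.
Proof.
case/diag_mxP => d ->; apply/matrixP => a b.
by rewrite mul_mx_diag !mxE eqxx mulr1n mulrC; case: (eqVneq b l) => [->|];
  rewrite ?andbF ?mulr0.
Qed.

End DiagonalMatrix.

Lemma unitmx_diag (R : fieldType) n (D : 'M[R]_n) :
  is_diag_mx D -> (forall i, D i i != 0) -> D \in unitmx.
Proof.
case/diag_mxP => d -> nz_d; rewrite unitmxE det_diag unitfE.
by apply/prodf_neq0 => i _; have := nz_d i; rewrite mxE eqxx mulr1n.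
Qed.

Section Kronecker.
Variable R : comPzRingType.

Lemma tensmxDl m n p q (A B : 'M[R]_(m, n)) (C : 'M[R]_(p, q)) :
  (A + B) *t C = A *t C + B *t C.
Proof. by apply/matrixP => i j; rewrite !mxE mulrDl. Qed.

Lemma tensmxDr m n p q (A : 'M[R]_(m, n)) (B C : 'M[R]_(p, q)) :
  A *t (B + C) = A *t B + A *t C.
Proof. by apply/matrixP => i j; rewrite !mxE mulrDr. Qed.

Lemma tensmxZl m n p q (a : R) (A : 'M[R]_(m, n)) (B : 'M[R]_(p, q)) :
  (a *: A) *t B = a *: (A *t B).
Proof. by apply/matrixP => i j; rewrite !mxE mulrA. Qed.

Lemma tensmx11_comm m n p (A : 'M[R]_m) (B : 'M[R]_n) (C : 'M[R]_p) :
  ((A *t 1%:M) *t 1%:M) *m ((1%:M *t B) *t C)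
  = ((1%:M *t B) *t C) *m ((A *t 1%:M) *t 1%:M).
Proof. by rewrite !tensmx_mul !mulmx1 !mul1mx. Qed.

End Kronecker.

Section BilinearForm.
Variables (R : comPzRingType) (n : nat).
Implicit Types (H K : 'M[R]_n) (x y z : 'cV[R]_n).

Definition bform H x y : R := (x^T *m H *m y) 0 0.
Definition qform H x : R := bform H x x.

Lemma bformE H x y : bform H x y = \sum_a \sum_b x a 0 * H a b * y b 0.
Proof.
rewrite /bform mxE; under eq_bigr do rewrite mxE big_distrl.
by rewrite exchange_big; apply: eq_bigr => a _; apply: eq_bigr => b _; rewrite !mxE.
Qed.

Lemma bform_tr H x y : bform H x y = bform H^T y x.
Proof.
rewrite /bform -[in RHS](trmxK (y^T *m H^T *m x)) [in RHS]mxE.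
by rewrite !trmx_mul !trmxK mulmxA.
Qed.

Lemma bformDr H x y z : bform H x (y + z) = bform H x y + bform H x z.
Proof. by rewrite /bform mulmxDr mxE. Qed.

Lemma bformNr H x y : bform H x (- y) = - bform H x y.
Proof. by rewrite /bform mulmxN mxE. Qed.

Lemma bform_mulmxr H K x y : bform H x (K *m y) = bform (H *m K) x y.
Proof. by rewrite /bform !mulmxA. Qed.

Lemma qformD H K x : qform (H + K) x = qform H x + qform K x.
Proof. by rewrite /qform /bform mulmxDr mulmxDl mxE. Qed.

Lemma qformZ a H x : qform (a *: H) x = a * qform H x.
Proof. by rewrite /qform /bform -scalemxAr -scalemxAl mxE. Qed.

Lemma qform_tr H x : qform H^T x = qform H x.
Proof. by rewrite /qform [RHS]bform_tr. Qed.

End BilinearForm.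

Lemma is_derive_qform (R : realType) n (H : 'M[R]_n) (Phi : R -> 'cV[R]_n) t :
  derivable Phi t 1 ->
  is_derive t 1 (fun s => qform H (Phi s))
    (bform H (derive1 Phi t) (Phi t) + bform H (Phi t) (derive1 Phi t)).
Proof.
move=> dPhi; pose phi a s := Phi s a 0.
have dphi a : is_derive t 1 (phi a) (derive1 Phi t a 0).
  apply: DeriveDef; first by move/derivable_mxP: dPhi; apply.
  by rewrite derive1E derive_mx // mxE.
have -> : (fun s => qform H (Phi s)) = \sum_a \sum_b (H a b \*: (phi a * phi b)).
  apply/funext => s; rewrite /qform bformE fct_sumE; apply: eq_bigr => a _.
  by rewrite fct_sumE; apply: eq_bigr => b _; rewrite /= mulrAC mulrC.
apply: is_derive_eq; rewrite !bformE -big_split; apply: eq_bigr => a _.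
rewrite -big_split; apply: eq_bigr => b _ /=.
rewrite /phi /GRing.scale /=; ring.
Qed.

Section NodalBlockMatrix.
Variables (R : realType) (N M : nat).

Lemma boldmx_comm (D1 : 'M[R]_N) (D2 : 'M[R]_M) F (Phi : 'cV[R]_(4 * N * M)) :
  is_diag_mx D1 -> is_diag_mx D2 ->
  ((1%:M *t D1) *t D2) *m boldmx F Phi = boldmx F Phi *m ((1%:M *t D1) *t D2).
Proof.
move=> dD1 dD2; rewrite /boldmx mulmx_sumr mulmx_suml; apply: eq_bigr => k _.
rewrite mulmx_sumr mulmx_suml; apply: eq_bigr => l _.
rewrite mulmx_sumr mulmx_suml; apply: eq_bigr => i _.
rewrite mulmx_sumr mulmx_suml; apply: eq_bigr => j _.
rewrite -scalemxAr -scalemxAl !tensmx_mul mul1mx mulmx1.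
by rewrite !mul_diag_delta_mx // !mul_delta_diag_mx.
Qed.

Lemma boldmx_symmetrizer (P : 'M[R]_4) (F G : ('I_4 -> R) -> 'M[R]_4)
    (Phi : 'cV[R]_(4 * N * M)) :
  is_diag_mx P -> (forall p, P *m G p = (F p)^T *m P) ->
  ((P *t 1%:M) *t 1%:M) *m boldmx G Phi
  = (boldmx F Phi)^T *m ((P *t 1%:M) *t 1%:M).
Proof.
move=> dP PG; pose E k l i j : 'M[R]_(4 * N * M) :=
  (delta_mx k l *t delta_mx i i) *t delta_mx j j.
have PGE p k l : P k k * G p k l = F p l k * P l l.
  move/matrixP/(_ k l): (PG p).
  by case/diag_mxP: dP => d ->; rewrite mul_diag_mx mul_mx_diag !mxE !eqxx !mulr1n.
have -> : ((P *t 1%:M) *t 1%:M) *m boldmx G Phi =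
    \sum_k \sum_l \sum_i \sum_j (P k k * G (nodal Phi i j) k l) *: E k l i j.
  rewrite /boldmx mulmx_sumr; apply: eq_bigr => k _.
  rewrite mulmx_sumr; apply: eq_bigr => l _.
  rewrite mulmx_sumr; apply: eq_bigr => i _.
  rewrite mulmx_sumr; apply: eq_bigr => j _.
  rewrite -scalemxAr !tensmx_mul !mul1mx mul_diag_delta_mx // !tensmxZl.
  by rewrite scalerA mulrC.
rewrite /boldmx exchange_big /= linear_sum mulmx_suml; apply: eq_bigr => l _.
rewrite linear_sum mulmx_suml; apply: eq_bigr => k _.
rewrite linear_sum mulmx_suml; apply: eq_bigr => i _.
rewrite linear_sum mulmx_suml; apply: eq_bigr => j _.
rewrite linearZ /= -scalemxAl !trmx_tens !trmx_delta !tensmx_mul !mulmx1.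
by rewrite mul_delta_diag_mx // !tensmxZl scalerA PGE.
Qed.

End NodalBlockMatrix.

Section EulerCoefficients.
Variables (R : realType) (g alpha2 : R).

Lemma Pmat_diag : is_diag_mx (Pmat g alpha2).
Proof.
apply/is_diag_mxP => i j; rewrite !mxE.
by case: i => [[|[|[|[|i]]]] Hi] //; case: j => [[|[|[|[|j]]]] Hj].
Qed.

Lemma mul_Pmat_A2 p : Pmat g alpha2 *m A2 g p = (A1 g p)^T *m Pmat g alpha2.
Proof.
apply/matrixP => k l; rewrite /Pmat /A1 /A2 /mx4.
rewrite !mxE !big_ord_recr !big_ord0 /= !mxE.
move: (p 0)^-1 => y.
by case: k => [[|[|[|[|k]]]] Hk] //; case: l => [[|[|[|[|l]]]] Hl] //=; field.
Qed.

Lemma mul_Pmat_B2 p : Pmat g alpha2 *m B2 g p = (B1 g p)^T *m Pmat g alpha2.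
Proof.
apply/matrixP => k l; rewrite /Pmat /B1 /B2 /mx4.
rewrite !mxE !big_ord_recr !big_ord0 /= !mxE.
move: (p 0)^-1 => y.
by case: k => [[|[|[|[|k]]]] Hk] //; case: l => [[|[|[|[|l]]]] Hl] //=; field.
Qed.

End EulerCoefficients.

Section EnergyFlux.
Variables (R : comPzRingType) (n : nat) (P Pt D Q A1 A2 : 'M[R]_n).
Hypotheses (PtD : Pt *m D = Q) (P_sym : P^T = P) (PQ : P *m Q = Q *m P).
Hypotheses (PtA2 : Pt *m A2 = A2 *m Pt) (PA2 : P *m A2 = A1^T *m P).

Lemma bform_flux x :
  bform (P *m Pt) x (D *m (A1 *m x) + A2 *m (D *m x))
  = qform ((Q + Q^T) *m (P *m A1)) x.
Proof.
have QA1 : P *m Pt *m D *m A1 = Q *m (P *m A1).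
  by rewrite -(mulmxA P) PtD PQ mulmxA.
have A2Q : P *m Pt *m A2 *m D = (P *m A1)^T *m Q.
  by rewrite -(mulmxA P) PtA2 !mulmxA PA2 -(mulmxA _ Pt) PtD trmx_mul P_sym.
rewrite mulmxDl qformD -[qform (Q^T *m _) x]qform_tr trmx_mul trmxK.
by rewrite -QA1 -A2Q bformDr !bform_mulmxr.
Qed.

End EnergyFlux.

Theorem mainTheorem3 (R : realType) (g alpha2 : R) (N M : nat)
  (Px Qx : 'M[R]_N) (Py Qy : 'M[R]_M) (I : set R) (Phi : R -> 'cV[R]_(4 * N * M)) :
  1 < g -> 0 < alpha2 -> (2 <= N)%N -> (2 <= M)%N ->
  is_SBP Px Qx -> is_SBP Py Qy -> open I ->
  let Dx := invmx Px *m Qx in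
  let Dy := invmx Py *m Qy in
  let bDx := ((1%:M : 'M[R]_4) *t Dx) *t (1%:M : 'M[R]_M) in
  let bDy := ((1%:M : 'M[R]_4) *t (1%:M : 'M[R]_N)) *t Dy in
  let tP := ((1%:M : 'M[R]_4) *t Px) *t Py in
  let bP := (Pmat g alpha2 *t (1%:M : 'M[R]_N)) *t (1%:M : 'M[R]_M) in
  let bBx := ((1%:M : 'M[R]_4) *t sbpB R N) *t Py in
  let bBy := ((1%:M : 'M[R]_4) *t Px) *t sbpB R M in
  (forall t, I t -> forall i j, Phi t (idx 0 i j) 0 != 0) ->
  (forall t, I t -> derivable Phi t 1) ->
  (forall t, I t ->
     derive1 Phi t + bDx *m (boldmx (A1 g) (Phi t) *m Phi t)
       + boldmx (A2 g) (Phi t) *m (bDx *m Phi t)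
       + bDy *m (boldmx (B1 g) (Phi t) *m Phi t)
       + boldmx (B2 g) (Phi t) *m (bDy *m Phi t) = 0) ->
  let E := fun s => ((Phi s)^T *m (bP *m tP) *m Phi s) 0 0 in
  forall t, I t ->
    let tA := 2 *: (bP *m boldmx (A1 g) (Phi t)) in
    let tB := 2 *: (bP *m boldmx (B1 g) (Phi t)) in
    derivable E t 1 /\
    derive1 E t + ((Phi t)^T *m (bBx *m tA + bBy *m tB) *m Phi t) 0 0 = 0.
Proof.
move=> _ _ _ _ [dPx [Px_pos sQx]] [dPy [Py_pos sQy]] _ Dx Dy bDx bDy tP bP bBx bBy
  _ dPhi scheme E t It tA tB.
set F := Phi t; set X := derive1 Phi t.
pose Qxb := ((1%:M : 'M[R]_4) *t Qx) *t Py.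
pose Qyb := ((1%:M : 'M[R]_4) *t Px) *t Qy.
have bP_sym : bP^T = bP by rewrite !trmx_tens !trmx1 (trmx_diag (Pmat_diag _ _)).
have H_sym : (bP *m tP)^T = bP *m tP.
  by rewrite trmx_mul bP_sym !trmx_tens trmx1 (trmx_diag dPx) (trmx_diag dPy) -tensmx11_comm.
have tP_bDx : tP *m bDx = Qxb.
  by rewrite !tensmx_mul !mulmx1 mulKVmx //; apply: unitmx_diag => // i; apply: lt0r_neq0.
have tP_bDy : tP *m bDy = Qyb.
  by rewrite !tensmx_mul !mulmx1 mulKVmx //; apply: unitmx_diag => // i; apply: lt0r_neq0.
have bBxE : bBx = Qxb + Qxb^T.
  by rewrite !trmx_tens trmx1 (trmx_diag dPy) -tensmxDl -tensmxDr sQx.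
have bByE : bBy = Qyb + Qyb^T.
  by rewrite !trmx_tens trmx1 (trmx_diag dPx) -tensmxDr sQy.
have fluxX := bform_flux tP_bDx bP_sym (tensmx11_comm _ _ _)
  (boldmx_comm _ _ dPx dPy) (boldmx_symmetrizer _ (Pmat_diag g alpha2) (mul_Pmat_A2 g alpha2)).
have fluxY := bform_flux tP_bDy bP_sym (tensmx11_comm _ _ _)
  (boldmx_comm _ _ dPx dPy) (boldmx_symmetrizer _ (Pmat_diag g alpha2) (mul_Pmat_B2 g alpha2)).
have X_eq : X = - ((bDx *m (boldmx (A1 g) F *m F) + boldmx (A2 g) F *m (bDx *m F))
                 + (bDy *m (boldmx (B1 g) F *m F) + boldmx (B2 g) F *m (bDy *m F))).
  by apply/eqP; rewrite -addr_eq0 !addrA; apply/eqP; exact: scheme.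
have dE : is_derive t 1 E (bform (bP *m tP) X F + bform (bP *m tP) F X).
  exact: is_derive_qform (dPhi t It).
split; first by case: dE.
rewrite derive1E derive_val [bform _ X F]bform_tr H_sym X_eq bformNr bformDr.
rewrite fluxX fluxY -[X in _ + X = 0]/(qform (bBx *m tA + bBy *m tB) F).
rewrite qformD -!scalemxAr !qformZ bBxE bByE.
ring.
Qed.
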